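(* Let $n\ge 2$ and let $S$ be an admissible peak set in $S^B_n$. Then \[ \max\{d_\ell(\sigma,\rho) : \sigma,\rho\in P^B(S;n)\}=\begin{cases}2n-1, & \text{if } \{2,n-1\}\subseteq S,\\ 2n, & \text{otherwise.}\end{cases} \]
   Context: $S^B_n$ is the set of bijections $\sigma$ of $\{-n,\dots,-1,1,\dots,n\}$ with $\sigma(-i)=-\sigma(i)$ for all $i$; a signed permutation is written in one-line notation $\sigma(1)\cdots\sigma(n)$. A signed permutation $\sigma$ has a peak at index $i\in\{2,\dots,n-1\}$ if $\sigma(i-1)<\sigma(i)>\sigma(i+1)$ (usual order on integers). $Peak(\sigma)$ is the set of indices where $\sigma$ has a peak, and for $S\subseteq[n]$, $P^B(S;n)=\{\sigma\in S^B_n : Peak(\sigma)=S\}$. $S$ is an admissible peak set if $P^B(S;n)\neq\emptyset$ (equivalently, $S\subseteq\{2,\dots,n-1\}$ and $S$ contains no two consecutive integers). The $\ell_\infty$-metric is $d_\ell(\sigma,\rho)=\max\{|\sigma(i)-\rho(i)| : i\in[n]\}$. *)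

From mathcomp Require Import all_boot all_order all_algebra.
Set Implicit Arguments. Unset Strict Implicit. Unset Printing Implicit Defensive.
Import Order.TTheory GRing.Theory Num.Theory.
Local Open Scope ring_scope.

Definition signed_dom (n : nat) (x : int) : bool := (x != 0) && (`|x|%N <= n)%N.

(* sigma is a signed permutation of S^B_n: a bijection of signed_dom n onto
   itself with sigma(-i) = -sigma(i).  Values outside the domain are irrelevant. *)
Definition is_signed_perm (n : nat) (sigma : int -> int) : Prop :=
  [/\ {in signed_dom n, forall x, signed_dom n (sigma x)},
      {in signed_dom n &, injective sigma},
      (forall y, signed_dom n y -> exists2 x, signed_dom n x & sigma x = y)
    & {in signed_dom n, forall i, sigma (- i) = - sigma i}].

Definition is_peak (n : nat) (sigma : int -> int) (i : nat) : bool :=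
  [&& (2 <= i)%N, (i <= n.-1)%N,
      sigma (i.-1)%:Z < sigma i%:Z & sigma (i.+1)%:Z < sigma i%:Z].

Definition peak_set_eq (n : nat) (sigma : int -> int) (S : pred nat) : Prop :=
  forall i : nat, S i = is_peak n sigma i.

Definition in_PB (S : pred nat) (n : nat) (sigma : int -> int) : Prop :=
  is_signed_perm n sigma /\ peak_set_eq n sigma S.

Definition admissible (S : pred nat) (n : nat) : Prop :=
  exists sigma, in_PB S n sigma.

Definition d_linf (n : nat) (sigma rho : int -> int) : nat :=
  \max_(1 <= i < n.+1) `|sigma i%:Z - rho i%:Z|%N.

(* Values of a signed permutation lie in [-n, n], so d_l <= 2n, with equality only if
   some position carries n in sigma and -n in rho.  When 2 and n-1 are peaks this is
   impossible: position 1 (resp. n) cannot carry n since its neighbour 2 (resp. n-1)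
   is a peak, while an interior position carrying n is a peak and one carrying -n is
   not.  The bound is attained by signed permutations k |-> +-a(k), with a the
   identity, the reversal k |-> n+1-k or the transposition (n-1 n), positive exactly
   on the peaks except that the second permutation of the pair flips the sign at an
   end. *)

From mathcomp Require Import all_boot all_order all_algebra.
From mathcomp Require Import zify.
Set Implicit Arguments. Unset Strict Implicit. Unset Printing Implicit Defensive.
Import Order.TTheory GRing.Theory Num.Theory.
Local Open Scope ring_scope.

Lemma signed_domP n x :
  signed_dom n x -> exists2 k : nat, (1 <= k <= n)%N & x = k%:Z \/ x = - k%:Z.
Proof. by case/andP=> x0 xn; exists `|x|%N; lia. Qed.

Lemma signed_dom_nat n (k : nat) : (1 <= k <= n)%N -> signed_dom n k%:Z.
Proof. by rewrite /signed_dom; lia. Qed.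

Lemma signed_perm_bound n sigma (k : nat) : is_signed_perm n sigma ->
  (1 <= k <= n)%N -> - n%:Z <= sigma k%:Z <= n%:Z.
Proof. by case=> dom _ _ _ /signed_dom_nat/dom/andP; lia. Qed.

Definition signed_val (a : nat -> nat) (s : pred nat) (k : nat) : int :=
  if s k then (a k)%:Z else - (a k)%:Z.

Definition signed_perm (a : nat -> nat) (s : pred nat) (x : int) : int :=
  if 0 <= x then signed_val a s `|x| else - signed_val a s `|x|.

Lemma signed_perm_nat a s (k : nat) : signed_perm a s k%:Z = signed_val a s k.
Proof. by rewrite /signed_perm le0z_nat. Qed.

Lemma signed_permN a s (k : nat) : (1 <= k)%N -> signed_perm a s (- k%:Z) = - signed_val a s k.
Proof. by move=> k_gt0; rewrite /signed_perm abszN absz_nat ifF //; lia. Qed.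

Lemma signed_perm_odd a s x : x != 0 -> signed_perm a s (- x) = - signed_perm a s x.
Proof.
rewrite /signed_perm abszN oppr_ge0 => x_neq0.
by case: (ltgtP x 0) x_neq0; rewrite ?opprK.
Qed.

Section SignedPermOfInvolution.
Variables (n : nat) (a : nat -> nat).
Hypothesis a_inv : forall k, (1 <= k <= n)%N -> (1 <= a k <= n)%N /\ a (a k) = k.

Lemma signed_perm_dom s x : signed_dom n x -> signed_dom n (signed_perm a s x).
Proof.
case/signed_domP=> k kn hx; have [akn _] := a_inv kn.
rewrite /signed_dom; case: hx => ->;
  rewrite ?signed_perm_nat ?signed_permN /signed_val; try lia; case: ifP; lia.
Qed.

Lemma signed_permK s t : {in [pred k | 1 <= k <= n]%N, forall k, t (a k) = s k} ->
  {in signed_dom n, cancel (signed_perm a s) (signed_perm a t)}.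
Proof.
move=> ts x /signed_domP [k kn hx]; have [akn aak] := a_inv kn.
have cancel_k : signed_perm a t (signed_perm a s k%:Z) = k%:Z.
  rewrite signed_perm_nat /signed_val -(ts _ kn).
  case tak: (t (a k));
    by rewrite ?signed_permN ?signed_perm_nat /signed_val ?tak ?aak ?opprK //; lia.
case: hx => ->; rewrite // signed_perm_odd ?signed_perm_odd ?cancel_k //; last lia.
by have /andP [] := signed_perm_dom s (signed_dom_nat kn).
Qed.

Lemma is_signed_perm_of_involution s : is_signed_perm n (signed_perm a s).
Proof.
pose t k := s (a k).
have ts : {in [pred k | 1 <= k <= n]%N, forall k, t (a k) = s k}.
  by move=> k /a_inv[_ aak]; rewrite /t aak.
have st : {in [pred k | 1 <= k <= n]%N, forall k, s (a k) = t k} by [].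
split.
- by move=> x; apply: signed_perm_dom.
- by move=> x y xn yn e; rewrite -(signed_permK ts xn) -(signed_permK ts yn) e.
- move=> y yn; exists (signed_perm a t y); first exact: signed_perm_dom.
  exact: (signed_permK st).
- by move=> x /andP [x_neq0 _]; apply: signed_perm_odd.
Qed.

End SignedPermOfInvolution.

Lemma peak_range n sigma i : is_peak n sigma i -> (2 <= i <= n.-1)%N.
Proof. by case/and4P=> -> ->. Qed.

Lemma peak_nonconsecutive n sigma i : is_peak n sigma i -> ~~ is_peak n sigma i.+1.
Proof. by case/and4P=> _ _ _ lt; apply/negP => /and4P [_ _ /= lt' _]; lia. Qed.

Lemma peak_set_eq_local n sigma (S : pred nat) :
  (forall i, S i -> (2 <= i <= n.-1)%N) ->
  (forall i, S i -> sigma i.-1%:Z < sigma i%:Z /\ sigma i.+1%:Z < sigma i%:Z) ->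
  (forall i, (2 <= i <= n.-1)%N -> ~~ S i ->
     sigma i%:Z < sigma i.-1%:Z \/ sigma i%:Z < sigma i.+1%:Z) ->
  peak_set_eq n sigma S.
Proof.
move=> S_range S_peak S_nonpeak i; rewrite /is_peak.
case Si: (S i).
  by have /andP [-> ->] := S_range _ Si; have [-> ->] := S_peak _ Si.
case: (boolP (2 <= i <= n.-1)%N) => [iI | /negP iI]; last by lia.
have := S_nonpeak _ iI (negbT Si); lia.
Qed.

Definition mirror n k := (n.+1 - k)%N.

Definition swap_top n k := if k == n then n.-1 else if k == n.-1 then n else k.

Lemma mirror_inv n k : (1 <= k <= n)%N ->
  (1 <= mirror n k <= n)%N /\ mirror n (mirror n k) = k.
Proof. rewrite /mirror; lia. Qed.

Lemma swap_top_inv n : (2 <= n)%N -> forall k, (1 <= k <= n)%N ->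
  (1 <= swap_top n k <= n)%N /\ swap_top n (swap_top n k) = k.
Proof.
rewrite /swap_top => n_ge2 k kn.
case: (eqVneq k n) => [-> | kNn]; first by rewrite eqxx ifN_eq; lia.
by case: (eqVneq k n.-1) => [-> | kNn1]; rewrite ?eqxx ?ifN_eq //; lia.
Qed.

Lemma swap_top_id n k : k != n -> k != n.-1 -> swap_top n k = k.
Proof. by move=> kn kn1; rewrite /swap_top !ifN. Qed.

Section Witnesses.
Variables (S : pred nat) (n : nat).
Hypothesis S_range : forall i, S i -> (2 <= i <= n.-1)%N.
Hypothesis S_isolated : forall i, S i -> ~~ S i.+1.

Lemma S_neighbors i : S i -> S i.-1 = false /\ S i.+1 = false.
Proof.
move=> Si; split; apply/negbTE; last exact: S_isolated.
by apply/negP => /S_isolated; rewrite prednK ?Si //; have := S_range Si; lia.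
Qed.

Lemma in_PB_id : in_PB S n (signed_perm id S).
Proof.
split; first exact: is_signed_perm_of_involution.
apply: peak_set_eq_local => // [i Si | i iI /negbTE Si];
  rewrite !signed_perm_nat /signed_val ?Si.
  by have := S_range Si; have [-> ->] := S_neighbors Si; lia.
by case: (S i.-1); lia.
Qed.

Lemma in_PB_id_top : ~~ S n.-1 -> in_PB S n (signed_perm id (predU S (pred1 n))).
Proof.
move=> /negbTE Sn; split; first exact: is_signed_perm_of_involution.
apply: peak_set_eq_local => // [i Si | i iI /negbTE Si];
  rewrite !signed_perm_nat /signed_val /= ?Si.
  have iI := S_range Si; have in1 : i != n.-1 by apply: contraTneq Si => ->; rewrite Sn.
  by have [-> ->] := S_neighbors Si; rewrite /=; repeat case: ifP; lia.
by case: (S i.-1) => /=; repeat case: ifP; lia.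
Qed.

Lemma in_PB_mirror : in_PB S n (signed_perm (mirror n) S).
Proof.
split; first exact: is_signed_perm_of_involution (@mirror_inv n) _.
apply: peak_set_eq_local => // [i Si | i iI /negbTE Si];
  rewrite !signed_perm_nat /signed_val /mirror ?Si.
  by have := S_range Si; have [-> ->] := S_neighbors Si; lia.
by case: (S i.+1); lia.
Qed.

Lemma in_PB_mirror_bottom :
  ~~ S 2%N -> in_PB S n (signed_perm (mirror n) (predU S (pred1 1%N))).
Proof.
move=> /negbTE S2; split; first exact: is_signed_perm_of_involution (@mirror_inv n) _.
apply: peak_set_eq_local => // [i Si | i iI /negbTE Si];
  rewrite !signed_perm_nat /signed_val /mirror /= ?Si.
  have iI := S_range Si; have i2 : i != 2%N by apply: contraTneq Si => ->; rewrite S2.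
  by have [-> ->] := S_neighbors Si; rewrite /=; repeat case: ifP; lia.
by case: (S i.+1) => /=; repeat case: ifP; lia.
Qed.

Lemma in_PB_swap_top : (2 <= n)%N -> S n.-1 ->
  in_PB S n (signed_perm (swap_top n) (predU S (pred1 n))).
Proof.
move=> n_ge2 Sn; split; first exact: is_signed_perm_of_involution (swap_top_inv n_ge2) _.
apply: peak_set_eq_local => // [i Si | i iI /negbTE Si];
  rewrite !signed_perm_nat /signed_val /= ?Si.
  have iI := S_range Si.
  have [-> ->] := S_neighbors Si; rewrite /swap_top /=.
  by repeat case: ifP; lia.
have in1 : i != n.-1 by apply: contraTneq Sn => <-; rewrite Si.
left; rewrite !swap_top_id; try lia.
by case: (S i.-1) => /=; repeat case: ifP; lia.
Qed.

End Witnesses.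

Lemma peak_neighbors_lt_top n sigma i : is_signed_perm n sigma -> is_peak n sigma i ->
  sigma i.-1%:Z < n%:Z /\ sigma i.+1%:Z < n%:Z.
Proof.
move=> sp /[dup] /peak_range iI /and4P [_ _ lt1 lt2].
have := signed_perm_bound (k := i) sp; lia.
Qed.

Lemma top_value_peak n sigma i : is_signed_perm n sigma -> (2 <= i <= n.-1)%N ->
  sigma i%:Z = n%:Z -> is_peak n sigma i.
Proof.
move=> sp iI top; have [_ inj _ _] := sp.
have iIn : (1 <= i <= n)%N by lia.
have lt_top j : (1 <= j <= n)%N -> j != i -> sigma j%:Z < n%:Z.
  move=> jn ji; have := signed_perm_bound sp jn.
  have : sigma j%:Z != sigma i%:Z.
    apply: contra ji => /eqP eq_val; apply/eqP.
    by case: (inj _ _ (signed_dom_nat jn) (signed_dom_nat iIn) eq_val).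
  lia.
have := lt_top i.-1; have := lt_top i.+1; rewrite /is_peak; lia.
Qed.

Lemma bottom_value_not_peak n sigma i : is_signed_perm n sigma ->
  sigma i%:Z = - n%:Z -> ~~ is_peak n sigma i.
Proof.
move=> sp bot; apply/negP => /[dup] /peak_range iI /and4P [_ _ lt _].
have := signed_perm_bound (k := i.-1) sp; lia.
Qed.

Lemma peak_left_not_top n sigma i : is_signed_perm n sigma -> is_peak n sigma i.+1 ->
  sigma i%:Z != n%:Z.
Proof. by move=> sp /(peak_neighbors_lt_top sp) [/lt_eqF ->]. Qed.

Lemma peak_right_not_top n sigma i : is_signed_perm n sigma -> is_peak n sigma i.-1 ->
  sigma i%:Z != n%:Z.
Proof.
move=> sp /[dup] /peak_range iI /(peak_neighbors_lt_top sp) [_].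
by rewrite prednK; [move/lt_eqF -> | lia].
Qed.

Lemma no_antipodal_values (S : pred nat) n sigma rho (i : nat) :
  in_PB S n sigma -> in_PB S n rho -> S 2%N -> S n.-1 -> (1 <= i <= n)%N ->
  sigma i%:Z = n%:Z -> rho i%:Z != - n%:Z.
Proof.
move=> [sp s_peaks] [rp r_peaks] S2 Sn iIn top; apply/eqP => bot.
move: S2 Sn; rewrite !s_peaks => peak2 peakn.
have i_neq1 : i != 1%N.
  by apply/eqP => i1; move: (peak_left_not_top (i := 1%N) sp peak2); rewrite -i1 top eqxx.
have i_neqn : i != n.
  by apply/eqP => iN; move: (peak_right_not_top (i := n) sp peakn); rewrite -{1}iN top eqxx.
have iI : (2 <= i <= n.-1)%N by lia.
have := bottom_value_not_peak rp bot.
by rewrite -r_peaks s_peaks top_value_peak.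
Qed.

Definition peak_diameter (S : pred nat) n :=
  (if S 2 && S n.-1 then (2 * n).-1 else 2 * n)%N.

Lemma dist_le_peak_diameter (S : pred nat) n sigma rho (i : nat) :
  in_PB S n sigma -> in_PB S n rho -> (1 <= i <= n)%N ->
  (`|sigma i%:Z - rho i%:Z| <= peak_diameter S n)%N.
Proof.
move=> sP rP iIn; have := signed_perm_bound sP.1 iIn; have := signed_perm_bound rP.1 iIn.
rewrite /peak_diameter; case: ifP => [/andP [S2 Sn] | _]; last by lia.
have := no_antipodal_values sP rP S2 Sn iIn; have := no_antipodal_values rP sP S2 Sn iIn.
lia.
Qed.

Lemma leq_d_linf n sigma rho (i : nat) : (1 <= i <= n)%N ->
  (`|sigma i%:Z - rho i%:Z| <= d_linf n sigma rho)%N.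
Proof.
move=> iIn; rewrite /d_linf.
apply: (@leq_bigmax_seq _ _ _ (fun i : nat => `|sigma i%:Z - rho i%:Z|%N)) => //.
by rewrite mem_index_iota; lia.
Qed.

Lemma d_linf_le_peak_diameter (S : pred nat) n sigma rho :
  in_PB S n sigma -> in_PB S n rho -> (d_linf n sigma rho <= peak_diameter S n)%N.
Proof.
move=> sP rP; apply/bigmax_leqP_seq => i; rewrite mem_index_iota => iIn _.
by apply: dist_le_peak_diameter sP rP _; lia.
Qed.

Lemma peak_diameter_attained (S : pred nat) n : (2 <= n)%N -> admissible S n ->
  exists sigma rho (i : nat), [/\ in_PB S n sigma, in_PB S n rho, (1 <= i <= n)%N
    & `|sigma i%:Z - rho i%:Z|%N = peak_diameter S n].
Proof.
move=> n_ge2 [sigma0 [_ peaks0]].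
have S_range i : S i -> (2 <= i <= n.-1)%N by rewrite peaks0 => /peak_range.
have S_isolated i : S i -> ~~ S i.+1 by rewrite !peaks0; apply: peak_nonconsecutive.
have S1 : S 1%N = false by apply/negP => /S_range.
have Sn : S n = false by apply/negP => /S_range; lia.
rewrite /peak_diameter; have [S2 | S2] := boolP (S 2%N); last first.
  exists (signed_perm (mirror n) S), (signed_perm (mirror n) (predU S (pred1 1%N))), 1%N.
  split; [exact: in_PB_mirror | exact: in_PB_mirror_bottom | lia |].
  by rewrite !signed_perm_nat /signed_val /mirror [predU _ _ _]/= S1 eqxx orbT andFb; lia.
have [Sn1 | Sn1] := boolP (S n.-1).
  exists (signed_perm id S), (signed_perm (swap_top n) (predU S (pred1 n))), n.
  split; [exact: in_PB_id | exact: in_PB_swap_top | lia |].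
  by rewrite !signed_perm_nat /signed_val /swap_top [predU _ _ _]/= Sn eqxx orbT andbT; lia.
exists (signed_perm id S), (signed_perm id (predU S (pred1 n))), n.
split; [exact: in_PB_id | exact: in_PB_id_top | lia |].
by rewrite !signed_perm_nat /signed_val [predU _ _ _]/= Sn eqxx orbT andbF; lia.
Qed.

Close Scope ring_scope.

Theorem theorem4p8 (n : nat) (S : pred nat) :
  (2 <= n)%N -> admissible S n ->
  let m := if S 2 && S n.-1 then (2 * n).-1 else (2 * n)%N in
  (exists sigma rho, [/\ in_PB S n sigma, in_PB S n rho & d_linf n sigma rho = m])
  /\ (forall sigma rho, in_PB S n sigma -> in_PB S n rho -> (d_linf n sigma rho <= m)%N).
Proof.
move=> n_ge2 adm; rewrite -/(peak_diameter S n); split.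
- have [sigma [rho [i [sP rP iIn dist_i]]]] := peak_diameter_attained n_ge2 adm.
  exists sigma, rho; split=> //; apply/eqP.
  by rewrite eqn_leq d_linf_le_peak_diameter //= -dist_i leq_d_linf.
- exact: d_linf_le_peak_diameter.
Qed.
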